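(* Let $\Bbbk=\mathbb{K}_0\subsetneq\mathbb{K}_1\subsetneq\cdots\subsetneq\mathbb{K}_m$ be a tower of fields with $[\mathbb{K}_j:\mathbb{K}_{j-1}]=2$ for $j=1,\dots,m$, and let $n\ge1$. There exists an algorithm for the inversion of a generic element of $M_n(\mathbb{K}_m)$ which costs $3(3^m-2^m)$ multiplications and $2^m$ inversions in $M_n(\Bbbk)$.
   Context: $M_n(\mathbb{L})$ denotes $n\times n$ matrices over $\mathbb{L}$. For each $j$, $\mathbb{K}_j=\mathbb{K}_{j-1}[\xi_j]$ where the minimal polynomial of $\xi_j$ over $\mathbb{K}_{j-1}$ is in normal form $x^2+\tau_j$ or $x^2+x+\tau_j$. ''Generic'' means for all elements outside a proper Zariski-closed subset of $M_n(\mathbb{K}_m)\cong\Bbbk^{2^m n^2}$. Additions and scalar multiplications are not counted. *)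

From HB Require Import structures.
From mathcomp Require Import all_boot all_order all_algebra all_field.
From mathcomp Require Import mpoly.
Set Implicit Arguments. Unset Strict Implicit. Unset Printing Implicit Defensive.
Import GRing.Theory.
Local Open Scope ring_scope.

(* Each instruction appends a new
   register:
   - ILin c0 cs : c0%:M + \sum_(c, j) c *: reg_j   (free: additions and
                  scalar multiplications by elements of k are not counted)
   - IMul i j   : reg_i *m reg_j                   (counted multiplication)
   - IInv i     : invmx reg_i, fails if reg_i is singular (counted inversion) *)
Inductive instr (k : Type) :=
  | ILin of k & seq (k * nat)
  | IMul of nat & nat
  | IInv of nat.

Section SLP.
Variables (k : fieldType) (n : nat).

Definition slp_step (regs : seq 'M[k]_n) (I : instr k) : option (seq 'M[k]_n) :=
  match I with
  | ILin c0 cs => Some (rcons regs (c0%:M + \sum_(p <- cs) p.1 *: nth 0 regs p.2))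
  | IMul i j => Some (rcons regs (nth 0 regs i *m nth 0 regs j))
  | IInv i => if nth 0 regs i \in unitmx then Some (rcons regs (invmx (nth 0 regs i)))
              else None
  end.

Definition slp_run (prog : seq (instr k)) (inputs : seq 'M[k]_n) : option (seq 'M[k]_n) :=
  foldl (fun o I => obind (fun regs => slp_step regs I) o) (Some inputs) prog.

Definition slp_eval (prog : seq (instr k)) (outs : seq nat) (inputs : seq 'M[k]_n)
  : option (seq 'M[k]_n) :=
  obind (fun regs => Some [seq nth 0 regs o | o <- outs]) (slp_run prog inputs).

Definition is_mul (I : instr k) : bool := if I is IMul _ _ then true else false.
Definition is_inv (I : instr k) : bool := if I is IInv _ then true else false.
Definition n_mul (prog : seq (instr k)) : nat := count is_mul prog.
Definition n_inv (prog : seq (instr k)) : nat := count is_inv prog.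
End SLP.

Section Coords.
Variables (k : fieldType) (L : fieldExtType k) (n d : nat).
Definition coord_mx (b : d.-tuple L) (A : 'M[L]_n) (i : 'I_d) : 'M[k]_n :=
  \matrix_(r, c) coord b i (A r c).
Definition coord_pt (b : d.-tuple L) (A : 'M[L]_n) : 'I_(d * (n * n)) -> k :=
  fun j => mxvec (\matrix_(i < d) mxvec (coord_mx b A i)) 0 j.
End Coords.

(* Write K_(j+1) = K_j + xi K_j with xi^2 = al + be xi (al, be in K_j) and
   store a matrix over K_j as its 2^j coordinate matrices over k.  A product
   over K_(j+1) costs three products over K_j (Karatsuba), hence 3^j products
   over k.  For A = A0 + xi A1 put X = A1 (A0 + be A1)^-1; then
   (1 - xi X) A = A0 - al X A1 =: S, so A^-1 = S^-1 - xi S^-1 X, which costs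
   two inversions and three products over K_j: this gives 2^m inversions and
   3 (3^m - 2^m) products.  The resulting straight-line program fails only if
   an inverted matrix is singular.  Running it on polynomial matrices over a
   common denominator shows that it succeeds exactly off the zero set of a
   polynomial in the coordinates of A, and this polynomial does not vanish at
   A = 1, where every inverted matrix is the identity. *)

From HB Require Import structures.
From mathcomp Require Import all_boot all_order all_algebra all_field.
From mathcomp Require Import mpoly.
From mathcomp Require Import ring zify.
Set Implicit Arguments. Unset Strict Implicit. Unset Printing Implicit Defensive.
Import GRing.Theory.
Local Open Scope ring_scope.

Section StraightLinePrograms.
Variables (k : fieldType) (n : nat).
Implicit Types (regs : seq 'M[k]_n) (p : seq (instr k)).

Lemma slp_run_cons I p regs :
  slp_run (I :: p) regs = obind (slp_run p) (slp_step regs I).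
Proof. by rewrite /slp_run /=; case: slp_step => //=; elim: p. Qed.

Lemma slp_run_cat p1 p2 regs :
  slp_run (p1 ++ p2) regs = obind (slp_run p2) (slp_run p1 regs).
Proof.
elim: p1 regs => [|I p IH] regs //=.
by rewrite !slp_run_cons; case: slp_step => //= r; apply: IH.
Qed.

Lemma slp_step_rcons I regs regs' :
  slp_step regs I = Some regs' -> exists v, regs' = rcons regs v.
Proof.
case: I => [c cs|i j|i] /=; last case: ifP => // _.
all: by move=> [<-]; eexists.
Qed.

Lemma slp_run_append p regs regs' : slp_run p regs = Some regs' ->
  exists2 e, regs' = regs ++ e & size e = size p.
Proof.
elim: p regs => [|I p IH] regs; first by move=> [<-]; exists [::]; rewrite ?cats0.
rewrite slp_run_cons; case Hs: slp_step => [r|] //= /IH [e -> <-].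
by have [v ->] := slp_step_rcons Hs; exists (v :: e); rewrite ?cat_rcons.
Qed.

Definition linval regs (cs : seq (k * nat)) : 'M[k]_n :=
  \sum_(q <- cs) q.1 *: nth 0 regs q.2.

Lemma slp_run_lins (I : Type) (f : I -> seq (k * nat)) (s : seq I) regs :
  (forall l q, q \in f l -> q.2 < size regs)%N ->
  slp_run [seq ILin 0 (f l) | l <- s] regs =
    Some (regs ++ [seq linval regs (f l) | l <- s]).
Proof.
elim: s regs => [|l s IH] regs /= Hf; first by rewrite cats0.
rewrite slp_run_cons /= raddf0 add0r IH => [|l' q /Hf]; last first.
  by rewrite size_rcons => /ltnW.
rewrite cat_rcons; congr (Some (_ ++ _ :: _)); apply: eq_map => l'.
by rewrite /linval !big_seq; apply: eq_bigr => q /Hf Hq; rewrite nth_rcons Hq.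
Qed.

End StraightLinePrograms.

Section GenericRuns.
Variables (k : fieldType) (n N : nat).
Implicit Types (D : {mpoly k[N]}) (Ns : seq 'M[{mpoly k[N]}]_n) (v : 'I_N -> k).

(* Registers given by polynomial matrices [Ns] over a common denominator [D]. *)
Definition eval_regs v D Ns : seq 'M[k]_n :=
  [seq (D.@[v])^-1 *: map_mx (meval v) X | X <- Ns].

Lemma nth_eval_regs v D Ns i :
  nth 0 (eval_regs v D Ns) i = (D.@[v])^-1 *: map_mx (meval v) (nth 0 Ns i).
Proof.
have [Hi|Hi] := ltnP i (size Ns); first by rewrite (nth_map 0).
by rewrite !nth_default ?size_map // map_mx0 scaler0.
Qed.

Lemma eval_regs_rcons v D Ns X : eval_regs v D (rcons Ns X) =
  rcons (eval_regs v D Ns) ((D.@[v])^-1 *: map_mx (meval v) X).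
Proof. exact: map_rcons. Qed.

Lemma eval_regs_scale v D c Ns : c.@[v] != 0 ->
  eval_regs v (D * c) [seq c *: X | X <- Ns] = eval_regs v D Ns.
Proof.
move=> cv; rewrite /eval_regs -map_comp; apply: eq_map => X /=.
by rewrite map_mxZ scalerA rmorphM invfM -mulrA mulVf // mulr1.
Qed.

Lemma slp_step_generic (I : instr k) D Ns : exists D' Ns', forall v,
  ((D'.@[v] != 0) = (D.@[v] != 0) && (slp_step (eval_regs v D Ns) I != None)) /\
  (D'.@[v] != 0 -> slp_step (eval_regs v D Ns) I = Some (eval_regs v D' Ns')).
Proof.
case: I => [c0 cs|i j|i].
- exists D, (rcons Ns ((c0%:MP * D)%:M + \sum_(q <- cs) q.1%:MP *: nth 0 Ns q.2)).
  move=> v; split=> [|Dv /=]; first by rewrite /= andbT.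
  rewrite eval_regs_rcons; congr (Some (rcons _ _)).
  rewrite map_mxD map_scalar_mx rmorphM /= mevalC scalerDr scale_scalar_mx.
  rewrite mulrCA mulVf // mulr1 map_mx_sum scaler_sumr; congr (_ + _).
  apply: eq_bigr => q _; rewrite nth_eval_regs map_mxZ /= (mevalC v q.1).
  by rewrite !scalerA mulrC.
- exists (D * D), (rcons [seq D *: X | X <- Ns] (nth 0 Ns i *m nth 0 Ns j)).
  move=> v; rewrite /= andbT rmorphM mulf_eq0 orbb; split=> // Dv.
  rewrite eval_regs_rcons eval_regs_scale // !nth_eval_regs.
  congr (Some (rcons _ _)).
  by rewrite map_mxM -scalemxAl -scalemxAr scalerA rmorphM invfM.
- set Ni := nth 0 Ns i.
  (* (N / D)^-1 = (D * D) \adj N / (D * \det N) *)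
  exists (D * \det Ni), (rcons [seq \det Ni *: X | X <- Ns] ((D * D) *: \adj Ni)).
  move=> v; have [Dv /=|/negPn/eqP Dv] := boolP (D.@[v] != 0); last first.
    by rewrite mevalM Dv mul0r eqxx.
  have Ni_unit : (nth 0 (eval_regs v D Ns) i \in unitmx) = ((\det Ni).@[v] != 0).
    rewrite nth_eval_regs -/Ni unitmxE detZ unitrM unitrX ?unitfE ?invr_eq0 //.
    by rewrite det_map_mx.
  rewrite Ni_unit mevalM mulf_eq0 negb_or Dv /=.
  split; first by case: ((\det Ni).@[v] != 0).
  move=> dv; rewrite dv eval_regs_rcons eval_regs_scale //.
  congr (Some (rcons _ _)).
  rewrite nth_eval_regs -/Ni invmxZ; last by rewrite -nth_eval_regs Ni_unit.
  have detNi : \det (map_mx (meval v) Ni) = (\det Ni).@[v] by rewrite det_map_mx.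
  have Ni_unit' : map_mx (meval v) Ni \in unitmx by rewrite unitmxE detNi unitfE.
  rewrite invrK /invmx Ni_unit' detNi map_mxZ map_mx_adj !scalerA mevalM invfM.
  by congr (_ *: _); field; rewrite dv Dv.
Qed.

Lemma slp_run_generic p D Ns : exists D', forall v,
  (D'.@[v] != 0) = (D.@[v] != 0) && (slp_run p (eval_regs v D Ns) != None).
Proof.
elim: p D Ns => [|I p IH] D Ns; first by exists D => v; rewrite andbT.
have [D1 [Ns1 H1]] := slp_step_generic I D Ns.
have [D' H'] := IH D1 Ns1.
exists D' => v; rewrite H' slp_run_cons.
have [E1 E2] := H1 v.
have [D1v|/negPf D1v] := boolP (D1.@[v] != 0); move: E1; rewrite ?D1v.
- by rewrite E2 //=; case: (D.@[v] != 0).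
- by case: (D.@[v] != 0); case: slp_step.
Qed.

End GenericRuns.

Section Code.
Variable k : fieldType.

(* A code fragment is relocatable: it receives the index of the first free
   register, from which on it stores its intermediate results. *)
Record block := Block { bprog : seq (instr k); bout : seq nat }.
Definition code := nat -> block.

Definition ret (o : seq nat) : code := fun=> Block [::] o.

Definition bind (c : code) (f : seq nat -> code) : code := fun r =>
  let b1 := c r in let b2 := f (bout b1) (r + size (bprog b1))%N in
  Block (bprog b1 ++ bprog b2) (bout b2).

Lemma count_bind (P : pred (instr k)) c f r :
  count P (bprog (bind c f r)) =
  (count P (bprog (c r)) +
   count P (bprog (f (bout (c r)) (r + size (bprog (c r)))%N)))%N.
Proof. exact: count_cat. Qed.

End Code.
Arguments ret {k}.

Section CodeSemantics.
Variables (k : fieldType) (n : nat).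
Implicit Types (c : code k) (regs : seq 'M[k]_n).
Implicit Types (Q : seq 'M[k]_n -> seq nat -> Prop).

Definition runc c regs := slp_run (bprog (c (size regs))) regs.
Definition outc c regs := bout (c (size regs)).

Lemma runc_prefix c regs regs' : runc c regs = Some regs' -> prefix regs regs'.
Proof. by case/slp_run_append=> e -> _; apply: prefix_prefix. Qed.

Lemma runc_bind_Some c f regs regs' : runc c regs = Some regs' ->
  runc (bind c f) regs = runc (f (outc c regs)) regs' /\
  outc (bind c f) regs = outc (f (outc c regs)) regs'.
Proof.
rewrite /runc /outc /bind /= slp_run_cat => Hc; rewrite Hc.
by have [e -> <-] := slp_run_append Hc; rewrite size_cat.
Qed.

Lemma runc_bind_None c f regs : runc c regs = None -> runc (bind c f) regs = None.
Proof. by rewrite /runc /bind /= slp_run_cat => ->. Qed.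

Definition twp c regs Q :=
  if runc c regs is Some regs' then Q regs' (outc c regs) else False.
Definition wp c regs Q :=
  if runc c regs is Some regs' then Q regs' (outc c regs) else True.

Lemma twp_bind c f regs Q1 Q : twp c regs Q1 ->
  (forall regs' o, prefix regs regs' -> Q1 regs' o -> twp (f o) regs' Q) ->
  twp (bind c f) regs Q.
Proof.
rewrite /twp; case Hc: runc => [r|] // H1 Hf.
by have [-> ->] := runc_bind_Some f Hc; apply: Hf (runc_prefix Hc) H1.
Qed.

Lemma wp_bind c f regs Q1 Q : wp c regs Q1 ->
  (forall regs' o, prefix regs regs' -> Q1 regs' o -> wp (f o) regs' Q) ->
  wp (bind c f) regs Q.
Proof.
rewrite /wp; case Hc: runc => [r|] H1 Hf; last by rewrite runc_bind_None.
by have [-> ->] := runc_bind_Some f Hc; apply: Hf (runc_prefix Hc) H1.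
Qed.

Lemma twp_wp c regs Q : twp c regs Q -> wp c regs Q.
Proof. by rewrite /twp /wp; case: runc. Qed.

Lemma twp_ret o regs Q : Q regs o -> twp (ret o) regs Q.
Proof. by []. Qed.

Lemma twp_mono c regs Q Q' : twp c regs Q ->
  (forall regs' o, Q regs' o -> Q' regs' o) -> twp c regs Q'.
Proof. by rewrite /twp; case: runc => // r HQ; apply. Qed.

Definition vals regs (x : seq nat) := [seq nth 0 regs i | i <- x].
Definition holds regs x V := all (fun i => i < size regs)%N x /\ vals regs x = V.

Lemma holds_prefix regs regs' x V :
  prefix regs regs' -> holds regs x V -> holds regs' x V.
Proof.
case/prefixP=> e -> [Hx <-]; split.
  by apply: sub_all Hx => i Hi; rewrite size_cat ltn_addr.
by apply/eq_in_map => i /(allP Hx) Hi; rewrite nth_cat Hi.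
Qed.

Lemma holds_cat regs x y V W :
  holds regs x V -> holds regs y W -> holds regs (x ++ y) (V ++ W).
Proof. by move=> [Hx <-] [Hy <-]; rewrite /holds /vals all_cat Hx Hy map_cat. Qed.

Lemma holds_take h regs x V : holds regs x V -> holds regs (take h x) (take h V).
Proof.
move=> [Hx <-]; split; last by rewrite /vals map_take.
by apply/allP => i /mem_take /(allP Hx).
Qed.

Lemma holds_drop h regs x V : holds regs x V -> holds regs (drop h x) (drop h V).
Proof.
move=> [Hx <-]; split; last by rewrite /vals map_drop.
by apply/allP => i /mem_drop /(allP Hx).
Qed.

Lemma holds_iota regs W : holds (regs ++ W) (iota (size regs) (size W)) W.
Proof.
split; first by apply/allP => i; rewrite mem_iota size_cat => /andP[].
apply: (@eq_from_nth _ 0); first by rewrite size_map size_iota.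
move=> i; rewrite size_map size_iota => Hi.
by rewrite (nth_map 0%N) ?size_iota // nth_iota // nth_cat ltnNge leq_addr addKn.
Qed.

End CodeSemantics.

Section Representation.
Variables (k : fieldType) (L : fieldExtType k) (n : nat).
Implicit Types (F T : seq L) (V W regs : seq 'M[k]_n) (x : seq nat).

Definition rep F V : 'M[L]_n := \sum_(i < size F) F`_i *: map_mx (in_alg L) V`_i.

Lemma repE F V r c : rep F V r c = \sum_(i < size F) V`_i r c *: F`_i.
Proof. by rewrite summxE; apply: eq_bigr => i _; rewrite !mxE mulr_algr. Qed.

Lemma rep_inj F V W : free F -> size V = size F -> size W = size F ->
  rep F V = rep F W -> V = W.
Proof.
move=> freeF sV sW /matrixP eqVW; apply: (@eq_from_nth _ 0) => [|i]; first by rewrite sV sW.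
rewrite sV => ltiF; apply/matrixP => r c; apply/eqP; rewrite -subr_eq0; apply/eqP.
have /(@freeP _ _ _ (in_tuple F)) freeF' := freeF.
apply: (freeF' (fun j => V`_j r c - W`_j r c) _ (Ordinal ltiF)).
have /eqP := eqVW r c; rewrite !repE -subr_eq0 -sumrB => /eqP sum0.
by rewrite -[RHS]sum0; apply: eq_bigr => j _; rewrite scalerBl.
Qed.

Lemma rep_cat F T V W : size V = size F -> rep (F ++ T) (V ++ W) = rep F V + rep T W.
Proof.
move=> sV; rewrite /rep size_cat big_split_ord /=; congr (_ + _).
  by apply: eq_bigr => i _; rewrite !nth_cat sV ltn_ord.
by apply: eq_bigr => i _; rewrite !nth_cat sV ltnNge leq_addr addKn.
Qed.

Lemma rep_scale z F V : rep [seq f * z | f <- F] V = z *: rep F V.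
Proof.
rewrite /rep size_map scaler_sumr; apply: eq_bigr => i _.
by rewrite (nth_map 0) // scalerA mulrC.
Qed.

Lemma rep_nseq0 F q : rep F (nseq q 0) = 0.
Proof. by rewrite /rep big1 // => i _; rewrite nth_nseq if_same map_mx0 scaler0. Qed.

Lemma rep_cons_nseq0 F M q : (0 < size F)%N ->
  rep F (M :: nseq q 0) = F`_0 *: map_mx (in_alg L) M.
Proof.
move=> F_gt0; rewrite /rep (bigD1 (Ordinal F_gt0)) //= big1 ?addr0 // => -[[|i] ?] //= _.
by rewrite nth_nseq if_same map_mx0 scaler0.
Qed.

Lemma rep_coord d (b : d.-tuple L) A : basis_of fullv b ->
  rep b [seq coord_mx b A i | i <- enum 'I_d] = A.
Proof.
move=> bB; apply/matrixP => r c; rewrite repE [RHS](coord_basis bB (memvf (A r c))).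
rewrite size_tuple; apply: eq_bigr => i _.
by rewrite (nth_map i) ?size_enum_ord // nth_ord_enum mxE.
Qed.

Definition encodes F regs x A :=
  exists W, [/\ holds regs x W, size W = size F & rep F W = A].

Lemma encodes_prefix F regs regs' x A :
  prefix regs regs' -> encodes F regs x A -> encodes F regs' x A.
Proof. by move=> Hp [W [HW sW <-]]; exists W; split=> //; apply: holds_prefix HW. Qed.

Lemma encodes_rep F regs x A : encodes F regs x A -> rep F (vals regs x) = A.
Proof. by move=> [W [[_ ->] _ <-]]. Qed.

Lemma encodes_split F z regs x A : encodes (F ++ [seq f * z | f <- F]) regs x A ->
  exists A0 A1, [/\ encodes F regs (take (size F) x) A0,
                    encodes F regs (drop (size F) x) A1 & A = A0 + z *: A1].
Proof.
move=> [W [HW sW <-]]; move: sW; rewrite size_cat size_map => sW.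
have sW0 : size (take (size F) W) = size F by rewrite size_takel // sW leq_addr.
exists (rep F (take (size F) W)), (rep F (drop (size F) W)); split.
- by exists (take (size F) W); split=> //; apply: holds_take.
- by exists (drop (size F) W); split; [apply: holds_drop|rewrite size_drop sW addnK|].
- by rewrite -{1}(cat_take_drop (size F) W) rep_cat // rep_scale.
Qed.

Lemma encodes_cat F z regs x0 x1 A0 A1 :
  encodes F regs x0 A0 -> encodes F regs x1 A1 ->
  encodes (F ++ [seq f * z | f <- F]) regs (x0 ++ x1) (A0 + z *: A1).
Proof.
move=> [W0 [H0 s0 <-]] [W1 [H1 s1 <-]]; exists (W0 ++ W1); split.
- exact: holds_cat.
- by rewrite !size_cat size_map s0 s1.
- by rewrite rep_cat // rep_scale.
Qed.

Definition lincomb_coefs F T (ts : seq (L * seq nat)) (l : 'I_(size T)) :=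
  flatten [seq [seq (coord (in_tuple T) l (t.1 * F`_i), nth 0%N t.2 i)
               | i : 'I_(size F) <- enum 'I_(size F)] | t <- ts].
Arguments lincomb_coefs : clear implicits.

Definition lincomb F T ts : code k := fun r =>
  Block [seq ILin 0 (lincomb_coefs F T ts l) | l <- enum 'I_(size T)] (iota r (size T)).

Lemma linval_lincomb_coefs regs F T ts l :
  linval regs (lincomb_coefs F T ts l) = \sum_(t <- ts) \sum_(i < size F)
     coord (in_tuple T) l (t.1 * F`_i) *: nth 0 regs (nth 0%N t.2 i).
Proof.
rewrite /linval big_flatten /= big_map; apply: eq_bigr => t _.
by rewrite big_map big_enum.
Qed.

Lemma lincomb_twp F T ts regs :
  (forall t, t \in ts -> exists A, encodes F regs t.2 A) ->
  (forall t i, t \in ts -> t.1 * F`_i \in <<T>>%VS) ->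
  twp (lincomb F T ts) regs
    (fun regs' o => encodes T regs' o (\sum_(t <- ts) t.1 *: rep F (vals regs t.2))).
Proof.
move=> Hts HT.
have sizeF t : t \in ts -> size t.2 = size F /\ all (fun i => i < size regs)%N t.2.
  by move=> /Hts [A [W [[Hv HW] sW _]]]; rewrite -sW -HW size_map.
set W := [seq linval regs (lincomb_coefs F T ts l) | l <- enum 'I_(size T)].
have sW : size W = size T by rewrite size_map size_enum_ord.
rewrite /twp /runc /outc /= slp_run_lins => [|l q]; last first.
  case/flattenP=> _ /mapP [t Ht ->] /mapP [i _ ->] /=.
  by have [sF /allP] := sizeF t Ht; apply; rewrite mem_nth // sF.
exists W; split; rewrite ?sW //; first by have := holds_iota regs W; rewrite sW.
apply/matrixP => r c; rewrite repE summxE.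
transitivity (\sum_(t <- ts) \sum_(i < size F)
   nth 0 regs (nth 0%N t.2 i) r c *: (t.1 * F`_i)).
  under eq_bigr => l _ do
    rewrite (nth_map l) ?size_enum_ord // nth_ord_enum linval_lincomb_coefs summxE scaler_suml.
  rewrite exchange_big /=; apply: eq_big_seq => t Ht.
  under eq_bigr => l _ do rewrite summxE scaler_suml.
  rewrite exchange_big; apply: eq_bigr => i _.
  rewrite [X in _ = _ *: X](coord_span (X := in_tuple T) (HT t i Ht)) scaler_sumr.
  by apply: eq_bigr => l _; rewrite !mxE scalerA mulrC.
apply: eq_big_seq => t Ht; rewrite mxE repE mulr_sumr; apply: eq_bigr => i _.
by rewrite (nth_map 0%N) ?(sizeF t Ht).1 // scalerAr.
Qed.

End Representation.

Lemma karatsuba_mx (R : comRingType) n (P0 P1 Q0 Q1 : 'M[R]_n) (x a b : R) :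
  x ^+ 2 = a + b * x ->
  (P0 + x *: P1) *m (Q0 + x *: Q1) =
  P0 *m Q0 + a *: (P1 *m Q1) +
  x *: ((P0 + P1) *m (Q0 + Q1) - P0 *m Q0 + (b - 1) *: (P1 *m Q1)).
Proof.
move=> x2; rewrite !mulmxDl !mulmxDr -!scalemxAl -!scalemxAr scalerA -expr2 x2.
move: (P0 *m Q0) (P0 *m Q1) (P1 *m Q0) (P1 *m Q1) => u v w z.
by apply/matrixP => i j; rewrite !mxE; ring.
Qed.

Lemma invmx_quadratic (R : fieldType) n (A0 A1 X S : 'M[R]_n) (x a b : R) :
  x ^+ 2 = a + b * x -> A0 + b *: A1 \in unitmx ->
  X = A1 *m invmx (A0 + b *: A1) -> S = A0 - a *: (X *m A1) -> S \in unitmx ->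
  A0 + x *: A1 \in unitmx /\ invmx (A0 + x *: A1) = invmx S + x *: - (invmx S *m X).
Proof.
move=> x2 Bunit defX defS Sunit.
have XA0 : X *m A0 = A1 - b *: (X *m A1).
  have XB : X *m (A0 + b *: A1) = A1 by rewrite defX mulmxKV.
  by rewrite -{1}XB mulmxDr scalemxAr addrK.
have XS : (1%:M - x *: X) *m (A0 + x *: A1) = S.
  rewrite mulmxBl mul1mx mulmxDr -!scalemxAl -scalemxAr XA0 scalerA -expr2 x2 defS.
  by move: (X *m A1) => Y; apply/matrixP => i j; rewrite !mxE; ring.
have inv_eq : invmx S + x *: - (invmx S *m X) = invmx S *m (1%:M - x *: X).
  by rewrite mulmxBr mulmx1 -scalemxAr scalerN.
have linv : (invmx S + x *: - (invmx S *m X)) *m (A0 + x *: A1) = 1%:M.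
  by rewrite inv_eq -mulmxA XS mulVmx.
have [_ Aunit] := mulmx1_unit linv.
by split=> //; rewrite -[LHS]mul1mx -linv mulmxK.
Qed.

Section QuadraticTowerAlgorithms.
Variables (k : fieldType) (L : fieldExtType k) (n : nat) (xi al be : nat -> L).

Fixpoint xi_basis j : seq L :=
  if j is j'.+1 then xi_basis j' ++ [seq e * xi j | e <- xi_basis j'] else [:: 1].

Lemma size_xi_basis j : size (xi_basis j) = (2 ^ j)%N.
Proof. by elim: j => //= j IH; rewrite size_cat size_map IH expnS mul2n addnn. Qed.

Lemma nth0_xi_basis j : (xi_basis j)`_0 = 1.
Proof. by elim: j => //= j IH; rewrite nth_cat size_xi_basis expn_gt0. Qed.

Local Notation lin j := (lincomb (xi_basis j) (xi_basis j)).

Fixpoint kmul j (x y : seq nat) : code k :=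
  match j with
  | 0 => fun r => Block [:: IMul k (nth 0%N x 0) (nth 0%N y 0)] [:: r]
  | j'.+1 =>
    let h := size (xi_basis j') in
    bind (kmul j' (take h x) (take h y)) (fun m0 =>
    bind (kmul j' (drop h x) (drop h y)) (fun m1 =>
    bind (lin j' [:: (1, take h x); (1, drop h x)]) (fun p =>
    bind (lin j' [:: (1, take h y); (1, drop h y)]) (fun q =>
    bind (kmul j' p q) (fun m2 =>
    bind (lin j' [:: (1, m0); (al j, m1)]) (fun r0 =>
    bind (lin j' [:: (1, m2); (-1, m0); (be j - 1, m1)]) (fun r1 =>
    ret (r0 ++ r1))))))))
  end.

Fixpoint kinv j (x : seq nat) : code k :=
  match j with
  | 0 => fun r => Block [:: IInv k (nth 0%N x 0)] [:: r]
  | j'.+1 =>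
    let h := size (xi_basis j') in
    bind (lin j' [:: (1, take h x); (be j, drop h x)]) (fun a =>
    bind (kinv j' a) (fun ai =>
    bind (kmul j' (drop h x) ai) (fun X =>
    bind (kmul j' X (drop h x)) (fun XA1 =>
    bind (lin j' [:: (1, take h x); (- al j, XA1)]) (fun s =>
    bind (kinv j' s) (fun si =>
    bind (kmul j' si X) (fun siX =>
    bind (lin j' [:: (-1, siX)]) (fun nsiX =>
    ret (si ++ nsiX)))))))))
  end.

Lemma count_lincomb (P : pred (instr k)) (F T : seq L) ts r :
  (forall c0 cs, ~~ P (ILin c0 cs)) -> count P (bprog (lincomb F T ts r)) = 0%N.
Proof.
by move=> NP; rewrite count_map; elim: (enum _) => //= l s ->; rewrite (negPf (NP _ _)).
Qed.

Lemma kmul_count j x y r :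
  n_mul (bprog (kmul j x y r)) = (3 ^ j)%N /\ n_inv (bprog (kmul j x y r)) = 0%N.
Proof.
rewrite /n_mul /n_inv; elim: j x y r => [|j IH] x y r //.
rewrite [kmul _ _ _]/= !count_bind !count_lincomb // !(IH _ _ _).1 !(IH _ _ _).2 expnS.
by rewrite /=; split; lia.
Qed.

Lemma kinv_count j x r :
  n_mul (bprog (kinv j x r)) = (3 * (3 ^ j - 2 ^ j))%N /\
  n_inv (bprog (kinv j x r)) = (2 ^ j)%N.
Proof.
elim: j x r => [|j IH] x r //; move: IH (@kmul_count j).
rewrite /n_mul /n_inv => IH kmulE.
rewrite [kinv _ _]/= !count_bind !count_lincomb // !(IH _ _).1 !(IH _ _).2.
rewrite !(kmulE _ _ _).1 !(kmulE _ _ _).2 /=.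
have le23 : (2 ^ j <= 3 ^ j)%N by case: j {IH kmulE} => // j; rewrite leq_exp2r.
by rewrite !expnS; split; lia.
Qed.

Variables (m : nat) (K : nat -> {subfield L}).
Hypothesis xi_basisP : forall j, (j <= m)%N -> basis_of (K j) (xi_basis j).
Hypothesis al_in : forall j, (j < m)%N -> al j.+1 \in K j.
Hypothesis be_in : forall j, (j < m)%N -> be j.+1 \in K j.
Hypothesis xi_quad : forall j, (j < m)%N -> xi j.+1 ^+ 2 = al j.+1 + be j.+1 * xi j.+1.

Local Notation enc j := (@encodes k L n (xi_basis j)).

Ltac extend_encodings Hp :=
  match type of Hp with is_true (prefix ?r ?r') =>
    repeat match goal with H : encodes _ r _ _ |- _ => move/(encodes_prefix Hp): H => H end
  end.

Lemma lin_twp j (ts : seq (L * seq nat)) regs : (j <= m)%N ->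
  (forall t, t \in ts -> t.1 \in K j /\ exists A, enc j regs t.2 A) ->
  twp (lin j ts) regs
    (fun regs' o => enc j regs' o (\sum_(t <- ts) t.1 *: rep (xi_basis j) (vals regs t.2))).
Proof.
move=> lejm Hts; apply: lincomb_twp => [t /Hts[]//|t i /Hts[cK _]].
have [ltiE|leEi] := ltnP i (size (xi_basis j)); last by rewrite nth_default ?mulr0 ?mem0v.
by rewrite (span_basis (xi_basisP lejm)) rpredM // (basis_mem (xi_basisP lejm)) ?mem_nth.
Qed.

Lemma lin1_twp j c x A regs : (j <= m)%N -> c \in K j -> enc j regs x A ->
  twp (lin j [:: (c, x)]) regs (fun regs' o => enc j regs' o (c *: A)).
Proof.
move=> lejm cK HA; apply: (twp_mono (lin_twp lejm _)) => [t|r o /=].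
  by rewrite inE => /eqP->; split=> //; exists A.
by rewrite big_seq1 (encodes_rep HA).
Qed.

Lemma lin2_twp j c1 c2 x1 x2 A1 A2 regs : (j <= m)%N -> c1 \in K j -> c2 \in K j ->
  enc j regs x1 A1 -> enc j regs x2 A2 ->
  twp (lin j [:: (c1, x1); (c2, x2)]) regs
    (fun regs' o => enc j regs' o (c1 *: A1 + c2 *: A2)).
Proof.
move=> lejm c1K c2K HA1 HA2; apply: (twp_mono (lin_twp lejm _)) => [t|r o /=].
  by rewrite !inE => /orP[]/eqP->; split=> //; [exists A1|exists A2].
by rewrite !big_cons big_nil addr0 (encodes_rep HA1) (encodes_rep HA2).
Qed.

Lemma lin3_twp j c1 c2 c3 x1 x2 x3 A1 A2 A3 regs : (j <= m)%N ->
  c1 \in K j -> c2 \in K j -> c3 \in K j ->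
  enc j regs x1 A1 -> enc j regs x2 A2 -> enc j regs x3 A3 ->
  twp (lin j [:: (c1, x1); (c2, x2); (c3, x3)]) regs
    (fun regs' o => enc j regs' o (c1 *: A1 + c2 *: A2 + c3 *: A3)).
Proof.
move=> lejm c1K c2K c3K HA1 HA2 HA3; apply: (twp_mono (lin_twp lejm _)) => [t|r o /=].
  by rewrite !inE => /or3P[]/eqP->; split=> //; [exists A1|exists A2|exists A3].
rewrite !big_cons big_nil addr0 addrA.
by rewrite (encodes_rep HA1) (encodes_rep HA2) (encodes_rep HA3).
Qed.

Lemma encodes0P regs x A : enc 0 regs x A ->
  (nth 0%N x 0 < size regs)%N /\ A = map_mx (in_alg L) (nth 0 regs (nth 0%N x 0)).
Proof.
move=> [W [[Hx HW] sW <-]]; have sx : size x = 1%N by rewrite -HW size_map in sW.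
rewrite /rep big_ord1 scale1r -HW (nth_map 0%N) ?sx //.
by split=> //; apply: (allP Hx); rewrite mem_nth ?sx.
Qed.

Lemma encodes0_rcons regs M : enc 0 (rcons regs M) [:: size regs] (map_mx (in_alg L) M).
Proof.
exists [:: M]; split; rewrite /rep ?big_ord1 ?scale1r //.
by rewrite /holds /vals /= size_rcons ltnSn nth_rcons ltnn eqxx.
Qed.

Lemma kmul_twp j x y A B regs : (j <= m)%N -> enc j regs x A -> enc j regs y B ->
  twp (kmul j x y) regs (fun regs' o => enc j regs' o (A *m B)).
Proof.
elim: j x y A B regs => [|j IH] x y A B regs Hjm HA HB.
  have [_ ->] := encodes0P HA; have [_ ->] := encodes0P HB.
  by rewrite -map_mxM; apply: encodes0_rcons.
have lejm := ltnW Hjm; have oneK := mem1v (K j).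
have [A0 [A1 [HA0 HA1 ->]]] := encodes_split HA.
have [B0 [B1 [HB0 HB1 ->]]] := encodes_split HB.
rewrite [kmul _ _ _]/=.
apply: (twp_bind (IH _ _ _ _ _ lejm HA0 HB0)) => r1 o1 E1 M0; extend_encodings E1.
apply: (twp_bind (IH _ _ _ _ _ lejm HA1 HB1)) => r2 o2 E2 M1; extend_encodings E2.
apply: (twp_bind (lin2_twp lejm oneK oneK HA0 HA1)) => r3 o3 E3 P; extend_encodings E3.
apply: (twp_bind (lin2_twp lejm oneK oneK HB0 HB1)) => r4 o4 E4 Q; extend_encodings E4.
apply: (twp_bind (IH _ _ _ _ _ lejm P Q)) => r5 o5 E5 M2; extend_encodings E5.
apply: (twp_bind (lin2_twp lejm oneK (al_in Hjm) M0 M1)) => r6 o6 E6 R0.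
extend_encodings E6.
have bK : be j.+1 - 1 \in K j by rewrite rpredB ?be_in.
have N1K : -1 \in K j by rewrite rpredN.
apply: (twp_bind (lin3_twp lejm oneK N1K bK M2 M0 M1)) => r7 o7 E7 R1.
extend_encodings E7.
apply: twp_ret; rewrite (karatsuba_mx _ _ _ _ (xi_quad Hjm)).
by move: R0 R1; rewrite !scale1r scaleN1r; apply: encodes_cat.
Qed.

Lemma kinv_wp j x A regs : (j <= m)%N -> enc j regs x A ->
  wp (kinv j x) regs (fun regs' o => A \in unitmx /\ enc j regs' o (invmx A)).
Proof.
elim: j x A regs => [|j IH] x A regs Hjm HA.
  have [_ ->] := encodes0P HA; rewrite /wp /runc /outc /slp_run /=.
  case: ifP => // Munit; rewrite map_unitmx Munit -map_invmx.
  by split=> //; apply: encodes0_rcons.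
have lejm := ltnW Hjm; have oneK := mem1v (K j).
have N1K : -1 \in K j by rewrite rpredN.
have NaK : - al j.+1 \in K j by rewrite rpredN al_in.
have [A0 [A1 [HA0 HA1 ->]]] := encodes_split HA.
rewrite [kinv _ _]/=.
apply: (wp_bind (twp_wp (lin2_twp lejm oneK (be_in Hjm) HA0 HA1))) => r1 o1 E1 HB.
extend_encodings E1.
apply: (wp_bind (IH _ _ _ lejm HB)) => r2 o2 E2 [Bunit HBi]; extend_encodings E2.
apply: (wp_bind (twp_wp (kmul_twp lejm HA1 HBi))) => r3 o3 E3 HX; extend_encodings E3.
apply: (wp_bind (twp_wp (kmul_twp lejm HX HA1))) => r4 o4 E4 HXA1; extend_encodings E4.
apply: (wp_bind (twp_wp (lin2_twp lejm oneK NaK HA0 HXA1))) => r5 o5 E5 HS.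
extend_encodings E5.
apply: (wp_bind (IH _ _ _ lejm HS)) => r6 o6 E6 [Sunit HSi]; extend_encodings E6.
apply: (wp_bind (twp_wp (kmul_twp lejm HSi HX))) => r7 o7 E7 HSiX; extend_encodings E7.
apply: (wp_bind (twp_wp (lin1_twp lejm N1K HSiX))) => r8 o8 E8 HN; extend_encodings E8.
apply: twp_wp; apply: twp_ret.
move: Bunit Sunit HSi HN; rewrite !scale1r scaleNr scaleN1r => Bunit Sunit HSi HN.
have [Aunit ->] := invmx_quadratic (xi_quad Hjm) Bunit erefl erefl Sunit.
by split=> //; apply: encodes_cat.
Qed.

Lemma encodes_one j regs x : (j < m)%N -> enc j.+1 regs x 1%:M ->
  enc j regs (take (size (xi_basis j)) x) 1%:M /\
  enc j regs (drop (size (xi_basis j)) x) 0.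
Proof.
set h := size (xi_basis j); move=> ltjm [W [HW sW repW]].
have h_gt0 : (0 < h)%N by rewrite /h size_xi_basis expn_gt0.
pose e := 1%:M :: nseq h.-1 (0 : 'M[k]_n).
have se : size e = h by rewrite /= size_nseq prednK.
have rep_e : rep (xi_basis j) e = 1%:M.
  by rewrite rep_cons_nseq0 // nth0_xi_basis scale1r map_mx1.
have W_eq : W = e ++ nseq h 0.
  have sxi : size (xi_basis j.+1) = (h + h)%N by rewrite /= size_cat size_map.
  apply: (rep_inj (basis_free (xi_basisP ltjm))); rewrite ?sW ?sxi ?size_cat ?se ?size_nseq //.
  by rewrite repW [xi_basis _.+1]/= rep_cat // rep_scale rep_nseq0 scaler0 addr0.
split; [exists e | exists (nseq h 0)]; rewrite ?se ?size_nseq ?rep_e ?rep_nseq0.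
  by split=> //; rewrite -(take_size_cat (nseq h 0) se) -W_eq; apply: holds_take.
by split=> //; rewrite -(drop_size_cat (nseq h 0) se) -W_eq; apply: holds_drop.
Qed.

Lemma kinv_twp1 j x regs : (j <= m)%N -> enc j regs x 1%:M ->
  twp (kinv j x) regs (fun regs' o => enc j regs' o 1%:M).
Proof.
elim: j x regs => [|j IH] x regs Hjm H1.
  have [_ M1] := encodes0P H1.
  have Munit : nth 0 regs (nth 0%N x 0) \in unitmx.
    by rewrite -(map_unitmx (in_alg L)) -M1 unitmx1.
  rewrite /twp /runc /outc /slp_run /= Munit -invmx1 M1 -map_invmx.
  exact: encodes0_rcons.
have lejm := ltnW Hjm; have oneK := mem1v (K j).
have N1K : -1 \in K j by rewrite rpredN.
have NaK : - al j.+1 \in K j by rewrite rpredN al_in.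
have [H10 H11] := encodes_one Hjm H1.
rewrite [kinv _ _]/=.
apply: (twp_bind (lin2_twp lejm oneK (be_in Hjm) H10 H11)) => r1 o1 E1 HB.
extend_encodings E1; rewrite scale1r scaler0 addr0 in HB.
apply: (twp_bind (IH _ _ lejm HB)) => r2 o2 E2 HBi; extend_encodings E2.
apply: (twp_bind (kmul_twp lejm H11 HBi)) => r3 o3 E3 HX; extend_encodings E3.
rewrite mul0mx in HX.
apply: (twp_bind (kmul_twp lejm HX H11)) => r4 o4 E4 HXA1; extend_encodings E4.
rewrite mul0mx in HXA1.
apply: (twp_bind (lin2_twp lejm oneK NaK H10 HXA1)) => r5 o5 E5 HS.
extend_encodings E5; rewrite scale1r scaler0 addr0 in HS.
apply: (twp_bind (IH _ _ lejm HS)) => r6 o6 E6 HSi; extend_encodings E6.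
apply: (twp_bind (kmul_twp lejm HSi HX)) => r7 o7 E7 HSiX; extend_encodings E7.
apply: (twp_bind (lin1_twp lejm N1K HSiX)) => r8 o8 E8 HN; extend_encodings E8.
apply: twp_ret; move: (encodes_cat (xi j.+1) HSi HN).
by rewrite mulmx0 !scaler0 addr0.
Qed.

Variables (d : nat) (b : d.-tuple L).
Hypothesis bB : basis_of fullv b.
Hypothesis Km : (K m : {vspace L}) = fullv.

Definition coords (A : 'M[L]_n) := [seq coord_mx b A i | i <- enum 'I_d].

Lemma size_coords A : size (coords A) = d.
Proof. by rewrite size_map size_enum_ord. Qed.

Definition tower_inv : code k :=
  bind (lincomb b (xi_basis m) [:: (1, iota 0 d)]) (fun y =>
  bind (kinv m y) (fun z => lincomb (xi_basis m) b [:: (1, z)])).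

Lemma tower_inv_count r :
  n_mul (bprog (tower_inv r)) = (3 * (3 ^ m - 2 ^ m))%N /\
  n_inv (bprog (tower_inv r)) = (2 ^ m)%N.
Proof.
move: (@kinv_count m); rewrite /n_mul /n_inv => kinvE.
by rewrite !count_bind !count_lincomb // !(kinvE _ _).1 !(kinvE _ _).2 !addn0 !add0n.
Qed.

Lemma encodes_coords A : encodes b (coords A) (iota 0 d) A.
Proof.
exists (coords A); split; rewrite ?rep_coord ?size_coords ?size_tuple //.
by have := holds_iota [::] (coords A); rewrite size_coords.
Qed.

Lemma to_xi_basis_twp A : twp (lincomb b (xi_basis m) [:: (1, iota 0 d)]) (coords A)
  (fun regs o => enc m regs o A).
Proof.
apply: (twp_mono (lincomb_twp _ _)) => [t|t i|r o /=].
- by rewrite inE => /eqP->; exists A; apply: encodes_coords.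
- by rewrite (span_basis (xi_basisP (leqnn m))) Km memvf.
- by rewrite big_seq1 scale1r (encodes_rep (encodes_coords A)).
Qed.

Lemma from_xi_basis_twp regs z A : enc m regs z A ->
  twp (lincomb (xi_basis m) b [:: (1, z)]) regs (fun regs' o => vals regs' o = coords A).
Proof.
move=> HA; apply: (twp_mono (lincomb_twp _ _)) => [t|t i|r o /=].
- by rewrite inE => /eqP->; exists A.
- by rewrite (span_basis bB) memvf.
rewrite big_seq1 scale1r (encodes_rep HA) => -[W [[_ ->] sW <-]].
by apply: (rep_inj (basis_free bB)); rewrite ?sW ?rep_coord ?size_coords ?size_tuple.
Qed.

Lemma tower_inv_correct A : slp_run (bprog (tower_inv d)) (coords A) != None ->
  A \in unitmx /\
  slp_eval (bprog (tower_inv d)) (bout (tower_inv d)) (coords A) = Some (coords (invmx A)).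
Proof.
have : wp tower_inv (coords A)
    (fun regs o => A \in unitmx /\ vals regs o = coords (invmx A)).
  apply: (wp_bind (twp_wp (to_xi_basis_twp A))) => r1 o1 _ HA.
  apply: (wp_bind (kinv_wp (leqnn m) HA)) => r2 o2 _ [Aunit HAi].
  by apply/twp_wp/(twp_mono (from_xi_basis_twp HAi)).
rewrite /wp /slp_eval /runc /outc size_coords.
by case: slp_run => // r [Aunit <-].
Qed.

Lemma tower_inv_run1 : slp_run (bprog (tower_inv d)) (coords 1%:M) != None.
Proof.
have : twp tower_inv (coords 1%:M) (fun _ _ => True).
  apply: (twp_bind (to_xi_basis_twp 1%:M)) => r1 o1 _ H1.
  apply: (twp_bind (kinv_twp1 (leqnn m) H1)) => r2 o2 _ H1i.
  exact: (twp_mono (from_xi_basis_twp H1i)).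
by rewrite /twp /runc size_coords; case: slp_run.
Qed.

End QuadraticTowerAlgorithms.

Lemma minPoly_deg2_root (F0 : fieldType) (L : fieldExtType F0) (K : {subfield L}) x :
  adjoin_degree K x = 2%N ->
  x ^+ 2 = - (minPoly K x)`_0 + - (minPoly K x)`_1 * x.
Proof.
move=> deg2; set p := minPoly K x.
have p3 : size p = 3%N by rewrite size_minPoly deg2.
have p2 : p`_2 = 1 by have /monicP := monic_minPoly K x; rewrite /lead_coef p3.
have /eqP := root_minPoly K x; rewrite -/p horner_coef p3 !big_ord_recl big_ord0 /=.
rewrite /bump /= p2 => px0; apply/eqP; rewrite -subr_eq0 -[X in _ == X]px0.
by apply/eqP; rewrite expr0 expr1 addn0; ring.
Qed.

Section QuadraticTower.
Variables (k : fieldType) (L : fieldExtType k) (m : nat) (K : nat -> {subfield L}).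
Hypothesis K0 : (K 0%N : {vspace L}) = 1%VS.
Hypothesis K_sub : forall j, (j < m)%N -> (K j <= K j.+1)%VS.
Hypothesis K_deg : forall j, (j < m)%N -> \dim_(K j) (K j.+1) = 2%N.

Lemma dim_tower_succ j : (j < m)%N -> \dim (K j.+1) = (2 * \dim (K j))%N.
Proof. by move=> ltjm; rewrite (dim_sup_field (K_sub ltjm)) K_deg. Qed.

Lemma dim_tower j : (j <= m)%N -> \dim (K j) = (2 ^ j)%N.
Proof.
elim: j => [|j IH] lejm; first by rewrite K0 dimv1.
by rewrite dim_tower_succ // IH ?expnS // ltnW.
Qed.

(* The guard makes the statement true for every [j], as [xchoose] requires. *)
Lemma tower_generator j : exists x, (j < m)%N ==> (x \in K j.+1) && (x \notin K j).
Proof.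
have [ltjm|] := ltnP j m; last by exists 0.
have : ~~ (K j.+1 <= K j)%VS.
  apply/negP => /dimvS; rewrite dim_tower_succ //.
  by have := adim_gt0 (K j); lia.
by case/subvPn=> x Kx1 Kx; exists x; rewrite Kx1 Kx.
Qed.

Lemma Fadjoin_generator j x : (j < m)%N -> x \in K j.+1 -> x \notin K j ->
  adjoin_degree (K j) x = 2%N /\ <<K j; x>>%VS = K j.+1.
Proof.
move=> ltjm Kx1 Kx.
have sub : (<<K j; x>> <= K j.+1)%VS by apply/FadjoinP; split=> //; apply: K_sub.
have deg_gt1 : (1 < adjoin_degree (K j) x)%N.
  by rewrite ltn_neqAle eq_sym adjoin_deg_eq1 Kx.
have deg_le2 : (adjoin_degree (K j) x <= 2)%N.
  by rewrite -(leq_pmul2r (adim_gt0 (K j))) -dim_Fadjoin -dim_tower_succ // dimvS.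
have deg2 : adjoin_degree (K j) x = 2%N by apply/eqP; rewrite eqn_leq deg_le2.
by split=> //; apply/eqP; rewrite eqEdim sub dim_Fadjoin deg2 dim_tower_succ // leqnn.
Qed.

Lemma memv_span_mulr (F : seq L) z y :
  y \in <<F>>%VS -> y * z \in <<[seq (f * z)%R | f <- F]>>%VS.
Proof.
move=> Fy; rewrite (coord_span (X := in_tuple F) Fy) mulr_suml.
apply: memv_suml => i _; rewrite -scalerAl memvZ // memv_span //.
by apply/mapP; exists F`_i; rewrite ?mem_nth.
Qed.

Lemma xi_basis_tower (xi : nat -> L) :
  (forall j, (j < m)%N ->
     adjoin_degree (K j) (xi j.+1) = 2%N /\ <<K j; xi j.+1>>%VS = K j.+1) ->
  forall j, (j <= m)%N -> basis_of (K j) (xi_basis xi j).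
Proof.
move=> gen; elim=> [|j IH] lejm; first by rewrite basisEdim /= K0 span_seq1 subvv dimv1.
have [deg2 adjK] := gen j lejm; have spanK := span_basis (IH (ltnW lejm)).
rewrite basisEdim size_xi_basis dim_tower // leqnn andbT -adjK.
apply/subvP => y /Fadjoin_poly_eq <-; set p := Fadjoin_poly _ _ y.
have /polyOverP pK := Fadjoin_polyOver (K j) (xi j.+1) y.
have sp : (size p <= 2)%N by rewrite -deg2 size_Fadjoin_poly.
rewrite (horner_coef_wide _ sp) !big_ord_recl big_ord0 /= expr0 mulr1 expr1 addr0.
by rewrite span_cat memv_add ?memv_span_mulr // spanK.
Qed.

Lemma quadratic_tower : exists xi al be : nat -> L,
  [/\ forall j, (j <= m)%N -> basis_of (K j) (xi_basis xi j),
      forall j, (j < m)%N -> al j.+1 \in K j,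
      forall j, (j < m)%N -> be j.+1 \in K j &
      forall j, (j < m)%N -> xi j.+1 ^+ 2 = al j.+1 + be j.+1 * xi j.+1].
Proof.
pose xi j := if j is j'.+1 then xchoose (tower_generator j') else 0.
pose al j := if j is j'.+1 then - (minPoly (K j') (xi j))`_0 else 0.
pose be j := if j is j'.+1 then - (minPoly (K j') (xi j))`_1 else 0.
have gen j : (j < m)%N ->
    adjoin_degree (K j) (xi j.+1) = 2%N /\ <<K j; xi j.+1>>%VS = K j.+1.
  move=> ltjm; have /implyP/(_ ltjm)/andP[] := xchooseP (tower_generator j).
  exact: Fadjoin_generator.
exists xi, al, be; split=> [|j ltjm|j ltjm|j ltjm].
- exact: xi_basis_tower.
- by rewrite rpredN; apply/polyOverP/minPolyOver.
- by rewrite rpredN; apply/polyOverP/minPolyOver.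
- exact: minPoly_deg2_root (gen j ltjm).1.
Qed.

End QuadraticTower.

Definition coord_vars (k : fieldType) n d : seq 'M[{mpoly k[d * (n * n)]}]_n :=
  [seq \matrix_(r, c) 'X_(mxvec_index i (mxvec_index r c)) | i <- enum 'I_d].

Lemma eval_coord_vars (k : fieldType) (L : fieldExtType k) n d (b : d.-tuple L)
  (A : 'M[L]_n) : eval_regs (coord_pt b A) 1 (coord_vars k n d) = coords b A.
Proof.
rewrite /eval_regs -map_comp; apply: eq_map => i /=.
rewrite meval1 invr1 scale1r; apply/matrixP => r c.
by rewrite !mxE mevalXU /coord_pt mxvecE mxE mxvecE mxE.
Qed.

Theorem proposition4p7 (k : fieldType) (L : fieldExtType k) (m n : nat)
  (K : nat -> {subfield L})
  (HK0 : (K 0%N : {vspace L}) = 1%VS)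
  (HKm : (K m : {vspace L}) = fullv)
  (HKsub : forall j, (j < m)%N -> (K j <= K j.+1)%VS)
  (HKdeg : forall j, (j < m)%N -> \dim_(K j) (K j.+1) = 2%N)
  (Hn : (0 < n)%N)
  (b : (\dim {:L}).-tuple L) (Hb : basis_of fullv b) :
  exists (prog : seq (instr k)) (outs : seq nat),
    n_mul prog = (3 * (3 ^ m - 2 ^ m))%N /\
    n_inv prog = (2 ^ m)%N /\
    exists P : {mpoly k[\dim {:L} * (n * n)]},
      (exists v, P.@[v] != 0) /\
      forall A : 'M[L]_n, P.@[coord_pt b A] != 0 ->
        A \in unitmx /\
        slp_eval prog outs [seq coord_mx b A i | i <- enum 'I_(\dim {:L})]
          = Some [seq coord_mx b (invmx A) i | i <- enum 'I_(\dim {:L})].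
Proof.
(* The construction works for every [n]. *)
have [xi [al [be [xiB alK beK xi2]]]] := quadratic_tower HK0 HKsub HKdeg.
have [mulE invE] := tower_inv_count xi al be m b (\dim {:L}).
have run1 := tower_inv_run1 n xiB alK beK xi2 Hb HKm.
have correct := tower_inv_correct xiB alK beK xi2 Hb HKm.
set c := tower_inv xi al be m b (\dim {:L}) in mulE invE run1 correct *.
exists (bprog c), (bout c); do 2!split=> //.
have [P HP] := slp_run_generic (bprog c) 1 (coord_vars k n (\dim {:L})).
exists P; split.
  by exists (coord_pt b 1%:M); rewrite HP meval1 oner_neq0 eval_coord_vars.
by move=> A; rewrite HP eval_coord_vars => /andP[_ /correct].
Qed.
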